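(* Let $C\subset\mathbb{R}^2$ be a nonempty compact set such that $U(x,y)\cap C\neq\emptyset$ for all $x,y\in C$ with $x\neq y$, where $U(x,y)=U(x,|x-y|)\cap U(y,|x-y|)$. Then $C$ is connected.
   Context: For $z\in\mathbb{R}^2$ and $r>0$, $U(z,r)$ denotes the open disc with centre $z$ and radius $r$. The set $U(x,y)$ is called the circle pair region of $x$ and $y$. *)

(* R^2 modelled as R * R (product topology = Euclidean topology). *)
From HB Require Import structures.
From mathcomp Require Import all_boot all_order all_algebra.
From mathcomp Require Import all_classical all_reals all_analysis.
Set Implicit Arguments. Unset Strict Implicit. Unset Printing Implicit Defensive.
Import Order.TTheory GRing.Theory Num.Theory.
Import numFieldNormedType.Exports.
Local Open Scope classical_set_scope.
Local Open Scope ring_scope.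

Definition edist {R : realType} (x y : R * R) : R :=
  Num.sqrt ((x.1 - y.1) ^+ 2 + (x.2 - y.2) ^+ 2).

Definition disc {R : realType} (z : R * R) (r : R) : set (R * R) :=
  [set p | edist z p < r].

Definition circle_pair {R : realType} (x y : R * R) : set (R * R) :=
  disc x (edist x y) `&` disc y (edist x y).

(** If [C] splits into two nonempty separated parts, both are compact, so
    some pair [a], [b] taken from different parts realises the distance
    between the parts.  Every point of the lens [U(a, b)] is strictly closer
    to [a] and to [b] than [a] and [b] are to each other, so it can lie in
    neither part; hence [U(a, b)] misses [C]. *)
From Pilot Require Import Defs.
From HB Require Import structures.
From mathcomp Require Import all_boot all_order all_algebra.
From mathcomp Require Import all_classical all_reals all_analysis.
Set Implicit Arguments. Unset Strict Implicit. Unset Printing Implicit Defensive.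
Import Order.TTheory GRing.Theory Num.Theory.
Import numFieldNormedType.Exports.
Local Open Scope classical_set_scope.
Local Open Scope ring_scope.

Lemma separated_closedl (T : topologicalType) (A B : set T) :
  closed (A `|` B) -> separated A B -> closed A.
Proof.
move=> clAB [clA_B _] x clA_x.
have : (A `|` B) x by apply: clAB; apply: closureS clA_x => y Ay; left.
case=> // Bx.
by have : (closure A `&` B) x by []; rewrite clA_B.
Qed.

Lemma compact_setX_argmin (T : topologicalType) (R : realType)
    (f : T * T -> R) (A B : set T) :
  A !=set0 -> B !=set0 -> compact A -> compact B -> continuous f ->
  exists a b, [/\ A a, B b & forall x y, A x -> B y -> f (a, b) <= f (x, y)].
Proof.
move=> [a0 Aa0] [b0 Bb0] cA cB cf.
have AB0 : (A `*` B) !=set0 by exists (a0, b0).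
have [[a b]] := compact_EVT_min AB0 (compact_setX cA cB) (continuous_subspaceT cf).
rewrite inE => -[Aa Bb] ab_min.
by exists a, b; split=> // x y Ax By; apply: ab_min; rewrite inE.
Qed.

(* [Defs.edist] is qualified because MathComp-Analysis has its own [edist]. *)
Lemma edistC (R : realType) (x y : R * R) : Defs.edist x y = Defs.edist y x.
Proof. by rewrite /Defs.edist -(opprB y.1) -(opprB y.2) !sqrrN. Qed.

Lemma edist_continuous (R : realType) :
  continuous (fun p : (R * R) * (R * R) => Defs.edist p.1 p.2).
Proof.
have coord (g : R * R -> R) (h : (R * R) * (R * R) -> R * R) :
    continuous g -> continuous h -> continuous (g \o h).
  by move=> cg ch q; apply: continuous_comp (ch q) (cg _).
have c1 : continuous (fun q : R * R => q.1) by move=> q; exact: cvg_fst.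
have c2 : continuous (fun q : R * R => q.2) by move=> q; exact: cvg_snd.
have l : continuous (fun q : (R * R) * (R * R) => q.1) by move=> q; exact: cvg_fst.
have r : continuous (fun q : (R * R) * (R * R) => q.2) by move=> q; exact: cvg_snd.
have csqd : continuous (fun q : (R * R) * (R * R) =>
    (q.1.1 - q.2.1) ^+ 2 + (q.1.2 - q.2.2) ^+ 2).
  by move=> q; apply: cvgD; rewrite expr2; apply: cvgM; apply: cvgB; apply: coord.
by move=> p; exact: continuous_comp (csqd p) (@sqrt_continuous R _).
Qed.

Theorem mainTheorem1 (R : realType) (C : set (R * R)) :
  C !=set0 -> compact C ->
  (forall x y, C x -> C y -> x <> y -> circle_pair x y `&` C !=set0) ->
  connected C.
Proof.
move=> _ cC lens; apply: contrapT => /connectedPn[E [E0 CE sepE]].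
have clC : closed C by apply: (compact_closed _ cC); exact: norm_hausdorff.
have sub b : E b `<=` C by rewrite CE; case: b => x Ex; [right|left].
have cE b : compact (E b).
  apply: subclosed_compact cC (sub b); move: clC; rewrite CE.
  case: b => clU; last exact: separated_closedl clU sepE.
  by rewrite setUC in clU; rewrite separatedC in sepE; exact: separated_closedl clU sepE.
have [a [b [Ea Eb ab_min]]] :=
  compact_setX_argmin (E0 false) (E0 true) (cE false) (cE true) (@edist_continuous R).
have ab : a <> b.
  move=> eab; suff : (E false `&` E true) a by rewrite separated_disjoint.
  by split=> //; rewrite eab.
have [z [[za zb] Cz]] := lens a b (sub _ _ Ea) (sub _ _ Eb) ab.
move: za zb; rewrite /disc /= => za zb.
move: Cz; rewrite CE => -[Ez|Ez].
- by have := lt_le_trans zb (ab_min z b Ez Eb); rewrite /= edistC ltxx.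
- by have := lt_le_trans za (ab_min a z Ea Ez); rewrite ltxx.
Qed.
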